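(* Let $S$ be a semiring and let $L\xrightarrow{f}M\xrightarrow{g}N$ be $S$-linear maps of left $S$-semimodules. (1) Suppose $g$ is injective. (a) $f$ is $k$-normal if and only if $g\circ f$ is $k$-normal. (b) If $g\circ f$ is $i$-normal (resp. normal), then $f$ is $i$-normal (resp. normal). (c) If moreover $g$ is $i$-normal, then $f$ is $i$-normal (resp. normal) if and only if $g\circ f$ is $i$-normal (resp. normal). (2) Suppose $f$ is surjective. (a) $g$ is $i$-normal if and only if $g\circ f$ is $i$-normal. (b) If $g\circ f$ is $k$-normal (resp. normal), then $g$ is $k$-normal (resp. normal). (c) If moreover $f$ is $k$-normal, then $g$ is $k$-normal (resp. normal) if and only if $g\circ f$ is $k$-normal (resp. normal).
   Context: A semiring $(S,+,0,\cdot,1)$ consists of a commutative monoid $(S,+,0)$ and a monoid $(S,\cdot,1)$ with $0\neq 1$, absorbing zero and both distributive laws; left $S$-semimodules and $S$-linear maps are as for modules over rings (without subtraction). For an $S$-linear map $h:X\to Y$, $\mathrm{Ker}(h)=\{x\in X\mid h(x)=0\}$. $h$ is $k$-normal if $h(x)=h(x')$ implies $x+k=x'+k'$ for some $k,k'\in\mathrm{Ker}(h)$; $h$ is $i$-normal if $h(X)=\overline{h(X)}$, where $\overline{h(X)}=\{y\in Y\mid y+h(x_1)=h(x_2)\text{ for some }x_1,x_2\in X\}$; $h$ is normal if it is both $k$-normal and $i$-normal. *)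

From HB Require Import structures.
From mathcomp Require Import all_boot all_algebra.
Set Implicit Arguments. Unset Strict Implicit. Unset Printing Implicit Defensive.
Import GRing.Theory.
Local Open Scope ring_scope.

Definition Ker (X Y : nmodType) (h : X -> Y) : X -> Prop := fun x => h x = 0.

Definition img_closure (X Y : nmodType) (h : X -> Y) : Y -> Prop :=
  fun y => exists x1 x2, y + h x1 = h x2.

Definition k_normal (X Y : nmodType) (h : X -> Y) : Prop :=
  forall x x', h x = h x' ->
    exists k k', Ker h k /\ Ker h k' /\ x + k = x' + k'.

Definition i_normal (X Y : nmodType) (h : X -> Y) : Prop :=
  forall y, (exists x, h x = y) <-> img_closure h y.

Definition normal (X Y : nmodType) (h : X -> Y) : Prop :=
  k_normal h /\ i_normal h.

Definition surjective (A B : Type) (h : A -> B) : Prop := forall b, exists a, h a = b.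

From HB Require Import structures.
From mathcomp Require Import all_boot all_algebra.
Import GRing.Theory.
Local Open Scope ring_scope.

(* Only additivity matters, so everything is proved for additive maps of
   commutative monoids.  Composing with an injective additive g changes
   neither kernels nor the equations defining k-normality and the closure of
   the image; precomposing with a surjective f changes neither the image nor
   its closure, and lets kernel elements of g be lifted along f. *)

Section ImageClosure.

Context {X Y : nmodType} (h : {additive X -> Y}).

Lemma img_closure_image y : (exists x, h x = y) -> img_closure h y.
Proof. by move=> [x <-]; exists 0, x; rewrite raddf0 addr0. Qed.

Lemma i_normalP : i_normal h <-> (forall y, img_closure h y -> exists x, h x = y).
Proof.
split=> [hN y /hN // | closed_sub y].
by split; [exact: img_closure_image | exact: closed_sub].
Qed.

End ImageClosure.

Section Normality.

Context {X Y Z : nmodType} (f : {additive X -> Y}) (g : {additive Y -> Z}).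

Section InjectiveComp.

Hypothesis g_inj : injective g.

Lemma Ker_comp_inj x : Ker (g \o f) x <-> Ker f x.
Proof.
rewrite /Ker /=; split=> [gfx0 | ->]; last exact: raddf0.
by apply: g_inj; rewrite gfx0 raddf0.
Qed.

Lemma k_normal_comp_inj : k_normal (g \o f) <-> k_normal f.
Proof.
split=> kN x x' E.
  have [k [k' [/Ker_comp_inj Kk [/Ker_comp_inj Kk' Exk]]]] := kN x x' (congr1 g E).
  by exists k, k'.
have [k [k' [Kk [Kk' Exk]]]] := kN x x' (g_inj _ _ E).
by exists k, k'; split; [apply/Ker_comp_inj | split; [apply/Ker_comp_inj |]].
Qed.

Lemma i_normal_of_comp_inj : i_normal (g \o f) -> i_normal f.
Proof.
move=> /i_normalP gfN; apply/i_normalP=> y [x1 [x2 E]].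
have [|x /g_inj <-] := gfN (g y); last by exists x.
by exists x1, x2; rewrite /= -E raddfD.
Qed.

Lemma i_normal_comp_inj : i_normal g -> i_normal f -> i_normal (g \o f).
Proof.
move=> /i_normalP gN /i_normalP fN; apply/i_normalP=> z [x1 [x2 /= E]].
have [|y Ey] := gN z; first by exists (f x1), (f x2).
subst z; have [|x <-] := fN y; last by exists x.
by exists x1, x2; apply: g_inj; rewrite raddfD.
Qed.

Lemma normal_of_comp_inj : normal (g \o f) -> normal f.
Proof. by case=> /k_normal_comp_inj kN /i_normal_of_comp_inj iN. Qed.

Lemma normal_comp_inj : i_normal g -> normal f -> normal (g \o f).
Proof. by move=> gN [/k_normal_comp_inj kN /(i_normal_comp_inj gN) iN]. Qed.

End InjectiveComp.

Section SurjectiveComp.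

Hypothesis f_surj : surjective f.

Lemma i_normal_comp_surj : i_normal (g \o f) <-> i_normal g.
Proof.
split=> /i_normalP N; apply/i_normalP=> z.
  move=> [y1 [y2 E]]; have [x1 Ex1] := f_surj y1; have [x2 Ex2] := f_surj y2.
  have [|x <-] := N z; last by exists (f x).
  by exists x1, x2; rewrite /= Ex1 Ex2.
move=> [x1 [x2 E]]; have [|y <-] := N z; first by exists (f x1), (f x2).
by have [x <-] := f_surj y; exists x.
Qed.

Lemma k_normal_of_comp_surj : k_normal (g \o f) -> k_normal g.
Proof.
move=> kN y y'; have [x <-] := f_surj y; have [x' <-] := f_surj y' => E.
have [k [k' [Kk [Kk' Exk]]]] := kN x x' E.
by exists (f k), (f k'); rewrite -!raddfD Exk.
Qed.

Lemma k_normal_comp_surj : k_normal f -> k_normal g -> k_normal (g \o f).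
Proof.
move=> fN gN x x' /gN [k [k' [Kk [Kk' Exk]]]].
have [a Ea] := f_surj k; have [a' Ea'] := f_surj k'; subst k k'.
have [|c [c' [Kc [Kc' Exac]]]] := fN (x + a) (x' + a'); first by rewrite !raddfD.
have Ker_add b d : Ker f d -> f (b + d) = f b by move=> Kd; rewrite raddfD Kd addr0.
exists (a + c), (a' + c'); rewrite /Ker /= !Ker_add //.
by split=> //; split=> //; rewrite !addrA.
Qed.

Lemma normal_of_comp_surj : normal (g \o f) -> normal g.
Proof. by case=> /k_normal_of_comp_surj kN /i_normal_comp_surj iN. Qed.

Lemma normal_comp_surj : k_normal f -> normal g -> normal (g \o f).
Proof. by move=> fN [/(k_normal_comp_surj fN) kN /i_normal_comp_surj iN]. Qed.

End SurjectiveComp.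

End Normality.

Theorem mainTheorem4 (S : nzSemiRingType) (L M N : lSemiModType S)
  (f : {linear L -> M}) (g : {linear M -> N}) :
  (injective g ->
     (k_normal f <-> k_normal (g \o f)) /\
     (i_normal (g \o f) -> i_normal f) /\
     (normal (g \o f) -> normal f) /\
     (i_normal g ->
        (i_normal f <-> i_normal (g \o f)) /\
        (normal f <-> normal (g \o f)))) /\
  (surjective f ->
     (i_normal g <-> i_normal (g \o f)) /\
     (k_normal (g \o f) -> k_normal g) /\
     (normal (g \o f) -> normal g) /\
     (k_normal f ->
        (k_normal g <-> k_normal (g \o f)) /\
        (normal g <-> normal (g \o f)))).
Proof.
split=> [g_inj | f_surj].
  split; first exact: iff_sym (k_normal_comp_inj f g g_inj).
  split; first exact: i_normal_of_comp_inj g_inj.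
  split; first exact: normal_of_comp_inj g_inj.
  move=> gN; split; split.
  - exact: i_normal_comp_inj.
  - exact: i_normal_of_comp_inj.
  - exact: normal_comp_inj.
  - exact: normal_of_comp_inj.
split; first exact: iff_sym (i_normal_comp_surj f g f_surj).
split; first exact: k_normal_of_comp_surj f_surj.
split; first exact: normal_of_comp_surj f_surj.
move=> fN; split; split.
- exact: k_normal_comp_surj.
- exact: k_normal_of_comp_surj.
- exact: normal_comp_surj.
- exact: normal_of_comp_surj.
Qed.
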